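(* Let $\Gamma$ be a finite connected tetravalent $G$-half-arc-transitive graph with $G\leq\mathrm{Aut}(\Gamma)$, and let $N$ be a solvable normal subgroup of $G$. If $G$ is non-solvable, then $\Gamma$ is a normal cover of $\Gamma_N$ and $N$ is semiregular on $V(\Gamma)$.
   Context: $\Gamma$ is $G$-half-arc-transitive if $G$ is transitive on vertices and edges but not on arcs. For $N\trianglelefteq G$, the normal quotient $\Gamma_N$ has as vertices the $N$-orbits on $V(\Gamma)$, two distinct orbits adjacent iff some edge of $\Gamma$ joins them. $\Gamma$ is a normal cover of $\Gamma_N$ if $\Gamma_N$ has the same valency as $\Gamma$. A permutation group is semiregular if all point stabilizers are trivial. *)

From mathcomp Require Import all_boot all_fingroup all_solvable.
Set Implicit Arguments. Unset Strict Implicit. Unset Printing Implicit Defensive.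
Local Open Scope group_scope.

Section Graphs.
Variable V : finType.

Definition simple_graph (e : rel V) := symmetric e /\ irreflexive e.

Definition graph_aut (e : rel V) : {set {perm V}} :=
  [set g : {perm V} | [forall x, forall y, e (g x) (g y) == e x y]].

Definition connected_graph (e : rel V) := forall x y : V, connect e x y.

Definition regular_of_valency (e : rel V) (k : nat) :=
  forall x : V, #|[set y | e x y]| = k.

Definition vertex_transitive (G : {set {perm V}}) :=
  forall x y : V, exists2 g, g \in G & g x = y.

Definition edge_transitive (e : rel V) (G : {set {perm V}}) :=
  forall x y u v : V, e x y -> e u v ->
    exists2 g, g \in G & (g x = u /\ g y = v) \/ (g x = v /\ g y = u).

Definition arc_transitive (e : rel V) (G : {set {perm V}}) :=
  forall x y u v : V, e x y -> e u v ->
    exists2 g, g \in G & g x = u /\ g y = v.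

Definition half_arc_transitive (e : rel V) (G : {set {perm V}}) :=
  [/\ vertex_transitive G, edge_transitive e G & ~ arc_transitive e G].

(* Normal quotient Gamma_N: vertices are the N-orbits on V;
   two distinct orbits are adjacent iff some edge joins them. *)
Definition quot_vertices (N : {set {perm V}}) : {set {set V}} :=
  [set orbit 'P N x | x : V].

Definition quot_adj (e : rel V) (N : {set {perm V}}) (B C : {set V}) : bool :=
  (B != C) && [exists x in B, exists y in C, e x y].

Definition quot_regular_of_valency (e : rel V) (N : {set {perm V}}) (k : nat) :=
  forall B, B \in quot_vertices N ->
    #|[set C in quot_vertices N | quot_adj e N B C]| = k.

Definition normal_cover (e : rel V) (N : {set {perm V}}) (k : nat) :=
  regular_of_valency e k /\ quot_regular_of_valency e N k.

Definition semiregular_perm (N : {group {perm V}}) :=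
  forall x : V, 'C_N[x | 'P] = 1.

End Graphs.

(* Orient every edge along the G-orbit of one of its arcs: each vertex gets two
   out- and two in-neighbours, so the square of an element fixing a vertex fixes
   its neighbours; an element of odd order is a power of its square, so by
   connectedness it is trivial, and vertex stabilizers are 2-groups.  Since N is
   transitive on each of its orbits, the kernel K of G on the N-orbits is N
   times a vertex stabilizer, hence solvable.  Let a be the number of neighbours
   of a vertex in the N-orbit of one of its neighbours.  If an edge lies inside
   an N-orbit then G = K.  If a >= 2 the quotient graph has valency at most 2,
   i.e. is a path or a cycle, and G^(2) acts trivially on it (the arcs form at
   most two trails, permuted by G, and an element preserving them acts on each
   as a power of the successor map).  Both contradict the non-solvability of G,
   so a = 1, which gives the valency of the quotient and the semiregularity. *)

From mathcomp Require Import all_boot all_fingroup all_solvable.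
Set Implicit Arguments. Unset Strict Implicit. Unset Printing Implicit Defensive.
Local Open Scope group_scope.

Section ValencyTwoAction.
Variables (gT : finGroupType) (T : finType) (to : {action gT &-> T}).
Variables (G : {group gT}) (vs : {set T}) (adj : rel T).
Hypothesis actsG : [acts G, on vs | to].
Hypothesis adj_act : forall g B C, g \in G -> adj (to B g) (to C g) = adj B C.
Hypothesis adj_sym : symmetric adj.
Hypothesis valency_le2 : {in vs, forall B, #|[set C in vs | adj B C]| <= 2}.
Hypothesis vs_connected : forall (P : pred T) B0, B0 \in vs -> P B0 ->
  {in vs &, forall B C, adj B C -> P B -> P C} -> {in vs, forall B, P B}.
Variables B0 C0 : T.
Hypotheses (vsB0 : B0 \in vs) (vsC0 : C0 \in vs) (adjB0C0 : adj B0 C0).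

Lemma vs_act g B : g \in G -> (to B g \in vs) = (B \in vs).
Proof. by move=> Gg; rewrite (actsP actsG). Qed.

Definition is_arc (a : T * T) := [&& a.1 \in vs, a.2 \in vs & adj a.1 a.2].

(* The neighbour of [C] other than [B], or [B] itself if [C] has no other. *)
Definition next_vertex B C := odflt B [pick D in vs | adj C D && (D != B)].

Lemma next_vertexP B C : is_arc (B, C) ->
  [/\ next_vertex B C \in vs, adj C (next_vertex B C) &
      {in vs, forall D, adj C D -> D = B \/ D = next_vertex B C}].
Proof.
case/and3P=> /= vsB vsC adjBC; rewrite /next_vertex.
case: pickP => [D /and3P[vsD adjCD neDB] | no_other] /=; last first.
  split; rewrite // 1?adj_sym // => D vsD adjCD; left.
  by apply/eqP; move: (no_other D); rewrite vsD adjCD /= => /negbT; rewrite negbK.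
split=> // D' vsD' adjCD'; have [-> | neD'B] := eqVneq D' B; [by left | right].
apply/eqP; apply: contraTT (valency_le2 vsC) => neD'D; rewrite -ltnNge.
have sub : D' |: [set B; D] \subset [set E in vs | adj C E].
  apply/subsetP=> x; rewrite !inE => /or3P[] /eqP ->;
  by rewrite ?vsB ?vsD ?vsD' ?adjCD ?adjCD' 1?adj_sym.
apply: leq_trans (subset_leq_card sub).
by rewrite cardsU1 cards2 eq_sym neDB !inE negb_or neD'B neD'D.
Qed.

Definition arc_step a := if is_arc a then (a.2, next_vertex a.1 a.2) else a.
Definition arc_rev (a : T * T) := (a.2, a.1).
Definition arc_act (a : T * T) g := (to a.1 g, to a.2 g).

Lemma is_arc_rev a : is_arc a -> is_arc (arc_rev a).
Proof. by case/and3P=> *; apply/and3P; rewrite adj_sym. Qed.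

Lemma is_arc_step a : is_arc a -> is_arc (arc_step a).
Proof.
case: a => B C arcBC; rewrite /arc_step arcBC.
by have [? ? _] := next_vertexP arcBC; case/and3P: arcBC => *; apply/and3P.
Qed.

Lemma arc_step_revK a : is_arc a -> arc_step (arc_rev (arc_step a)) = arc_rev a.
Proof.
case: a => B C arcBC; have [vsD adjCD nextBC] := next_vertexP arcBC.
have arcDC : is_arc (next_vertex B C, C).
  by case/and3P: arcBC => /= _ vsC _; rewrite /is_arc /= vsD vsC adj_sym.
rewrite /arc_step arcBC /arc_rev /= arcDC /=; congr (_, _).
have [_ _ nextDC] := next_vertexP arcDC; case/and3P: arcBC => /= vsB _ adjBC.
have adjCB : adj C B by rewrite adj_sym.
by have [eqB | <-] := nextDC B vsB adjCB; rewrite // -eqB.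
Qed.

Lemma arc_step_inj : injective arc_step.
Proof.
move=> a b; case arc_a: (is_arc a); case arc_b: (is_arc b) => eq_ab.
- have /(congr1 arc_rev) : arc_rev (arc_step (arc_rev (arc_step a))) =
                            arc_rev (arc_step (arc_rev (arc_step b))) by rewrite eq_ab.
  by rewrite !arc_step_revK //; case: a b {arc_a arc_b eq_ab} => ? ? [? ?] [-> ->].
- by move: (is_arc_step arc_a); rewrite eq_ab /arc_step arc_b arc_b.
- by move: (is_arc_step arc_b); rewrite -eq_ab /arc_step arc_a arc_a.
- by move: eq_ab; rewrite /arc_step arc_a arc_b.
Qed.

Lemma fconnect_rev a b : is_arc a ->
  fconnect arc_step a b -> fconnect arc_step (arc_rev b) (arc_rev a).
Proof.
move=> arc_a /iter_findex <-; elim: (findex _ _ _) => [|n IHn]; first exact: connect0.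
have arc_n : is_arc (iter n arc_step a) by elim: n {IHn} => //= n; apply: is_arc_step.
rewrite iterS; apply: connect_trans IHn.
by rewrite -(arc_step_revK arc_n); apply: fconnect1.
Qed.

Lemma is_arc_act a g : g \in G -> is_arc (arc_act a g) = is_arc a.
Proof. by case: a => B C Gg; rewrite /is_arc /= adj_act // !vs_act. Qed.

Lemma next_vertex_act B C g : g \in G -> is_arc (B, C) ->
  to (next_vertex B C) g = next_vertex (to B g) (to C g).
Proof.
move=> Gg arcBC; have arcBCg : is_arc (to B g, to C g).
  by rewrite -[(_, _)]/(arc_act (B, C) g) is_arc_act.
have [vsD adjCD nextBC] := next_vertexP arcBC.
have [vsE adjCEg nextBCg] := next_vertexP arcBCg.
have vsDg : to (next_vertex B C) g \in vs by rewrite vs_act.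
have adjCDg : adj (to C g) (to (next_vertex B C) g) by rewrite adj_act.
have [eqDB | //] := nextBCg _ vsDg adjCDg.
have vsEg : to (next_vertex (to B g) (to C g)) g^-1 \in vs by rewrite vs_act ?groupV.
have adjCE : adj C (to (next_vertex (to B g) (to C g)) g^-1).
  by rewrite -(adj_act _ _ Gg) actKV.
apply: (act_inj to g^-1); rewrite actK.
by have [-> | ->] := nextBC _ vsEg adjCE; first exact: (act_inj to g).
Qed.

Lemma arc_step_act a g : g \in G -> arc_act (arc_step a) g = arc_step (arc_act a g).
Proof.
move=> Gg; rewrite /arc_step is_arc_act //; case arc_a: (is_arc a) => //.
by case: a arc_a => B C arcBC; rewrite /arc_act /= next_vertex_act.
Qed.

Lemma iter_arc_step_act n a g : g \in G ->
  arc_act (iter n arc_step a) g = iter n arc_step (arc_act a g).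
Proof. by move=> Gg; elim: n => //= n IHn; rewrite arc_step_act // IHn. Qed.

Lemma fconnect_act a b g : g \in G ->
  fconnect arc_step a b -> fconnect arc_step (arc_act a g) (arc_act b g).
Proof. by move=> Gg /iter_findex <-; rewrite iter_arc_step_act //; apply: fconnect_iter. Qed.

Lemma arc_act1 a : arc_act a 1 = a.
Proof. by case: a => B C; rewrite /arc_act !act1. Qed.

Lemma arc_actM a g h : arc_act a (g * h) = arc_act (arc_act a g) h.
Proof. by case: a => B C; rewrite /arc_act !actM. Qed.

Lemma arc_actK a g : arc_act (arc_act a g) g^-1 = a.
Proof. by case: a => B C; rewrite /arc_act !actK. Qed.

Let arc0 := (B0, C0).

Lemma is_arc0 : is_arc arc0. Proof. exact/and3P. Qed.

Lemma vertex_has_arc B : B \in vs -> exists C, is_arc (B, C).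
Proof.
move=> vsB; apply/existsP; move: B vsB; apply: (vs_connected vsB0).
  by apply/existsP; exists C0; apply: is_arc0.
move=> B C vsB vsC adjBC _; apply/existsP; exists B.
by apply: (is_arc_rev (a := (B, C))); apply/and3P.
Qed.

Definition forward a := fconnect arc_step arc0 a.

Lemma forward_or_backward a : is_arc a ->
  forward a || fconnect arc_step (arc_rev arc0) a.
Proof.
pose on_trail a := forward a || fconnect arc_step (arc_rev arc0) a.
have on_trail_step b : on_trail b -> on_trail (arc_step b).
  case/orP=> trail_b; apply/orP; [left | right];
  by apply: connect_trans trail_b (fconnect1 _ _).
have on_trail_rev b : is_arc b -> on_trail b -> on_trail (arc_rev b).
  move=> arc_b /orP[] trail_b; apply/orP; [right | left];
    rewrite /forward (fconnect_sym arc_step_inj); apply: fconnect_rev trail_b => //.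
  - exact: is_arc0.
  - exact: is_arc_rev is_arc0.
case: a => B C arcBC; case/and3P: (arcBC) => /= vsB _ _.
pose P B := [forall C, is_arc (B, C) ==> on_trail (B, C)].
suff /forallP/(_ C)/implyP : P B by apply.
clear arcBC C; move: B vsB; apply: (vs_connected vsB0).
  apply/forallP=> C; apply/implyP=> arcB0C.
  have [-> | neCC0] := eqVneq C C0; first by rewrite /on_trail /forward connect0.
  have [_ _ nextC0B0] := next_vertexP (is_arc_rev is_arc0).
  case/and3P: arcB0C => /= _ vsC adjB0C.
  have [eqC | eqC] := nextC0B0 C vsC adjB0C; first by rewrite eqC eqxx in neCC0.
  have -> : (B0, C) = arc_step (arc_rev arc0).
    by rewrite /arc_step is_arc_rev ?is_arc0 //= -eqC.
  by apply: on_trail_step; rewrite /on_trail connect0 orbT.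
move=> B C vsB vsC adjBC /forallP trail_B; apply/forallP=> D; apply/implyP=> arcCD.
have arcBC : is_arc (B, C) by apply/and3P.
have trail_BC : on_trail (B, C) by have := trail_B C; rewrite arcBC.
have [_ _ nextBC] := next_vertexP arcBC.
case/and3P: arcCD => /= _ vsD adjCD.
have [-> | eqD] := nextBC D vsD adjCD; first exact: on_trail_rev arcBC trail_BC.
have -> : (C, D) = arc_step (B, C) by rewrite /arc_step arcBC /= -eqD.
exact: on_trail_step.
Qed.

Lemma fix_arc0_astab c : c \in G -> arc_act arc0 c = arc0 -> c \in 'C(vs | to).
Proof.
move=> Gc fix0; have fix_rev0 : arc_act (arc_rev arc0) c = arc_rev arc0.
  by rewrite -[LHS]/(arc_rev (arc_act arc0 c)) fix0.
have fix_arc a : is_arc a -> arc_act a c = a.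
  move/forward_or_backward=> /orP[] /iter_findex <-;
  by rewrite iter_arc_step_act ?fix0 ?fix_rev0.
apply/astabP=> B /vertex_has_arc[C /fix_arc].
by rewrite /arc_act /= => -[].
Qed.

(* When the two trails are distinct, [G] permutes them. *)
Lemma forward_act g a : ~~ forward (arc_rev arc0) -> g \in G -> is_arc a ->
  forward (arc_act a g) = (forward (arc_act arc0 g) == forward a).
Proof.
move=> not_fwd_rev0 Gg arc_a.
have same_src b c d :
    fconnect arc_step c d -> fconnect arc_step b c = fconnect arc_step b d.
  move=> cd; apply/idP/idP=> bc; first exact: connect_trans bc cd.
  by apply: connect_trans bc _; rewrite (fconnect_sym arc_step_inj).
have backward b : is_arc b -> ~~ forward b -> fconnect arc_step (arc_rev arc0) b.
  by move/forward_or_backward; case: (forward b).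
have not_both b : fconnect arc_step (arc_rev arc0) b -> ~~ forward b.
  move=> rev0_b; apply: contra not_fwd_rev0 => fwd_b.
  by rewrite /forward (same_src _ _ _ rev0_b).
have arc0g : is_arc (arc_act arc0 g) by rewrite is_arc_act // is_arc0.
case fwd_a: (forward a).
  by rewrite eqb_id /forward -(same_src _ _ _ (fconnect_act Gg fwd_a)).
have rev_ag := fconnect_act Gg (backward _ arc_a (negbT fwd_a)).
case fwd0g: (forward (arc_act arc0 g)) => /=.
  apply/negbTE/not_both; rewrite -(same_src _ _ _ rev_ag) (fconnect_sym arc_step_inj).
  exact: (fconnect_rev is_arc0 fwd0g).
have := fconnect_rev (is_arc_rev is_arc0) (backward _ arc0g (negbT fwd0g)).
by rewrite /forward -(same_src _ _ _ rev_ag) (fconnect_sym arc_step_inj).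
Qed.

Definition forward_stab := [set g in G | forward (arc_act arc0 g)].

Lemma forward_stab_group_set : group_set forward_stab.
Proof.
apply/group_setP; split; first by rewrite inE group1 arc_act1 /forward connect0.
move=> g h; rewrite !inE => /andP[Gg fwd_g] /andP[Gh fwd_h]; rewrite groupM //=.
by rewrite arc_actM; apply: connect_trans fwd_h (fconnect_act Gh fwd_g).
Qed.

Canonical forward_stab_group := Group forward_stab_group_set.

Lemma der1_sub_forward_stab : G^`(1) \subset forward_stab.
Proof.
rewrite derg1 /commutator gen_subG; apply/subsetP=> _ /imset2P[g h Gg Gh ->].
rewrite inE groupR //=.
have [fwd_rev0 | not_fwd_rev0] := boolP (forward (arc_rev arc0)).
  have arc_gh : is_arc (arc_act arc0 [~ g, h]) by rewrite is_arc_act ?groupR // is_arc0.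
  by case/orP: (forward_or_backward arc_gh) => // /(connect_trans fwd_rev0).
have fwdM x y : x \in G -> y \in G -> forward (arc_act arc0 (x * y)) =
    (forward (arc_act arc0 y) == forward (arc_act arc0 x)).
  by move=> Gx Gy; rewrite arc_actM forward_act // is_arc_act // is_arc0.
have fwdV x : x \in G -> forward (arc_act arc0 x^-1) = forward (arc_act arc0 x).
  move=> Gx; have := fwdM _ _ Gx (groupVr Gx); rewrite mulgV arc_act1 /forward connect0.
  by case: (fconnect _ _ (arc_act arc0 x^-1)); case: (fconnect _ _ (arc_act arc0 x)).
rewrite commgEl /conjg !mulgA !fwdM ?groupM ?groupV // !fwdV //.
by case: (forward (arc_act arc0 g)); case: (forward (arc_act arc0 h)).
Qed.

Lemma forward_stab_commute g h : g \in forward_stab -> h \in forward_stab ->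
  arc_act arc0 (g * h) = arc_act arc0 (h * g).
Proof.
rewrite !inE => /andP[Gg /iter_findex Eg] /andP[Gh /iter_findex Eh].
move: Eg Eh; set i := findex _ _ _; set j := findex _ _ _ => Eg Eh.
by rewrite !arc_actM -Eg -Eh !iter_arc_step_act // -Eg -Eh -!iterD addnC.
Qed.

Lemma der2_sub_astab : G^`(2) \subset 'C(vs | to).
Proof.
have sub_G : forward_stab \subset G by apply/subsetP=> x; rewrite inE => /andP[].
apply: subset_trans (dergS 1 der1_sub_forward_stab) _.
rewrite derg1 /commutator gen_subG; apply/subsetP=> _ /imset2P[g h fwd_g fwd_h ->].
apply: fix_arc0_astab; first by rewrite groupR // (subsetP sub_G).
have -> : [~ g, h] = (g^-1 * h^-1) * (h^-1 * g^-1)^-1.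
  by rewrite invMg !invgK commgEl /conjg !mulgA.
by rewrite arc_actM forward_stab_commute ?groupV // arc_actK.
Qed.

End ValencyTwoAction.

Lemma der_sol (gT : finGroupType) n (G : {group gT}) : solvable G^`(n) = solvable G.
Proof.
apply/idP/idP=> [|/(solvableS (der_sub n G)) //]; elim: n => // n IHn sol_n1; apply: IHn.
by rewrite (series_sol (der_normalS n G)) sol_n1 abelian_sol ?der_abelian.
Qed.

Lemma sqr_fix_card_le2 (T : finType) (S : {set T}) (g : {perm T}) y :
  #|S| <= 2 -> {in S, forall z, g z \in S} -> y \in S -> (g ^+ 2) y = y.
Proof.
move=> card_S g_S Sy; rewrite expgS expg1 permM.
have [gy_y | ne_gy_y] := eqVneq (g y) y; first by rewrite !gy_y.
have Sgy := g_S _ Sy.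
have /eqP S_eq : [set y; g y] == S.
  by rewrite eqEcard cards2 eq_sym ne_gy_y card_S subUset !sub1set Sy Sgy.
have := g_S _ Sgy; rewrite -S_eq !inE => /orP[/eqP // | /eqP/perm_inj eq_gy].
by rewrite eq_gy eqxx in ne_gy_y.
Qed.

Lemma card_set_sum (T : finType) (P : pred T) : #|[set x | P x]| = \sum_x P x.
Proof. by rewrite -sum1dep_card big_mkcond; apply: eq_bigr => x _; case: (P x). Qed.

Lemma half_arc_transitive_edge (V : finType) (e : rel V) (G : {set {perm V}}) :
  half_arc_transitive e G -> exists x y, e x y.
Proof.
case=> _ _ not_at.
case: (pickP (fun xy : V * V => e xy.1 xy.2)) => [[x y] e_xy | no_edge].
  by exists x, y.
by case: not_at => x y ? ? e_xy; move: (no_edge (x, y)); rewrite /= e_xy.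
Qed.

Section HalfArcTransitive.
Variables (V : finType) (e : rel V) (G : {group {perm V}}).
Hypotheses (e_sym : symmetric e) (e_connected : connected_graph e).
Hypotheses (G_aut : G \subset graph_aut e) (G_hat : half_arc_transitive e G).

Lemma aut_edge g x y : g \in G -> e (g x) (g y) = e x y.
Proof.
by move/(subsetP G_aut); rewrite inE => /forallP/(_ x)/forallP/(_ y)/eqP.
Qed.

Lemma connected_ind (P : pred V) x y :
  (forall z w, e z w -> P z -> P w) -> P x -> P y.
Proof.
move=> P_e Px; case/connectP: (e_connected x y) => p.
elim: p x Px => [|z p IHp] x Px /=; first by move=> _ ->.
by case/andP=> e_xz path_zp last_y; apply: (IHp z) => //; apply: P_e Px.
Qed.

Lemma vertex_transitive_G x y : exists2 g, g \in G & g x = y.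
Proof. by case: G_hat => G_vt _ _; apply: G_vt. Qed.

Variables v0 u0 : V.
Hypothesis e_v0u0 : e v0 u0.

Definition orient x y := [exists g in G, (g v0 == x) && (g u0 == y)].

Lemma orientP x y : reflect (exists2 g, g \in G & g v0 = x /\ g u0 = y) (orient x y).
Proof.
apply: (iffP existsP) => [[g /andP[Gg /andP[/eqP <- /eqP <-]]] | [g Gg [<- <-]]].
  by exists g.
by exists g; rewrite Gg !eqxx.
Qed.

Lemma orient_edge x y : orient x y -> e x y.
Proof. by case/orientP=> g Gg [<- <-]; rewrite aut_edge. Qed.

Lemma orient_act g x y : g \in G -> orient x y -> orient (g x) (g y).
Proof.
move=> Gg /orientP[h Gh [<- <-]]; apply/orientP; exists (h * g); rewrite ?groupM //.
by rewrite !permM.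
Qed.

Lemma edge_orient x y : e x y -> orient x y || orient y x.
Proof.
case: G_hat => _ G_et _ e_xy.
by have [g Gg [[<- <-] | [<- <-]]] := G_et v0 u0 x y e_v0u0 e_xy; apply/orP;
  [left | right]; apply/orientP; exists g.
Qed.

Lemma orient_asym x y : orient x y -> ~~ orient y x.
Proof.
case/orientP=> g1 Gg1 [E1 E2]; apply/negP => /orientP[g2 Gg2 [F1 F2]].
case: G_hat => _ _; apply.
pose f := g1 * g2^-1.
have Gf : f \in G by rewrite groupM ?groupV.
have f_v0 : f v0 = u0 by rewrite permM E1 -F2 permK.
have f_u0 : f u0 = v0 by rewrite permM E2 -F1 permK.
have from0 x' y' : e x' y' -> exists2 h, h \in G & h v0 = x' /\ h u0 = y'.
  case/edge_orient/orP=> /orientP[h Gh [<- <-]]; first by exists h.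
  by exists (f * h); [exact: groupM | split; rewrite permM ?f_v0 ?f_u0].
move=> x1 y1 x2 y2 /from0[h1 Gh1 [<- <-]] /from0[h2 Gh2 [<- <-]].
by exists (h1^-1 * h2); rewrite ?groupM ?groupV // !permM !permK.
Qed.

Definition out_nbrs x := [set y | orient x y].
Definition in_nbrs x := [set y | orient y x].

Lemma out_nbrs_act g x : g \in G -> out_nbrs (g x) = g @: out_nbrs x.
Proof.
move=> Gg; apply/setP=> z; rewrite inE; apply/idP/imsetP => [orient_gxz | [y]].
  by exists (g^-1 z); rewrite ?permKV // inE -(permK g x) orient_act ?groupV.
by rewrite inE => /(orient_act Gg) orient_gxy ->.
Qed.

Lemma in_nbrs_act g x : g \in G -> in_nbrs (g x) = g @: in_nbrs x.
Proof.
move=> Gg; apply/setP=> z; rewrite inE; apply/idP/imsetP => [orient_zgx | [y]].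
  by exists (g^-1 z); rewrite ?permKV // inE -(permK g x) orient_act ?groupV.
by rewrite inE => /(orient_act Gg) orient_ygx ->.
Qed.

Lemma card_out_nbrs_in_nbrs x : #|out_nbrs x| = #|in_nbrs x|.
Proof.
have const_card (F : V -> {set V}) :
    (forall g y, g \in G -> F (g y) = g @: F y) -> forall y, #|F y| = #|F x|.
  move=> F_act y; have [g Gg <-] := vertex_transitive_G x y.
  by rewrite F_act // card_imset //; apply: perm_inj.
have card_out := const_card _ out_nbrs_act; have card_in := const_card _ in_nbrs_act.
have : \sum_y #|out_nbrs y| = \sum_y #|in_nbrs y|.
  rewrite (eq_bigr _ (fun y _ => card_set_sum (orient y))) exchange_big.
  by apply: eq_bigr => y _; rewrite card_set_sum.
rewrite (eq_bigr _ (fun y _ => card_out y)) (eq_bigr _ (fun y _ => card_in y)).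
by rewrite !sum_nat_const => /eqP; rewrite eqn_mul2l => /orP[/eqP/card0_eq/(_ x) | /eqP].
Qed.

Lemma card_out_nbrs_add_in_nbrs x : #|out_nbrs x| + #|in_nbrs x| = #|[set y | e x y]|.
Proof.
rewrite -cardsUI [_ :&: _](_ : _ = set0) ?cards0 ?addn0; last first.
  apply/setP=> y; rewrite !inE; apply/negbTE/nandP.
  by case o_xy: (orient x y); [right; apply: orient_asym | left].
apply: eq_card => y; rewrite !inE; apply/idP/idP => [/orP[] /orient_edge // | /edge_orient //].
by rewrite e_sym.
Qed.

Lemma card_out_nbrs k x : regular_of_valency e k.*2 -> #|out_nbrs x| = k.
Proof.
move=> e_valency; apply: double_inj.
by rewrite -(e_valency x) -card_out_nbrs_add_in_nbrs -card_out_nbrs_in_nbrs addnn.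
Qed.

Hypothesis e_valency4 : regular_of_valency e 4.

Lemma stab_sqr_fix_nbr g x y : g \in G -> g x = x -> e x y -> (g ^+ 2) y = y.
Proof.
move=> Gg gx e_xy; have card_out : #|out_nbrs x| = 2 by apply: card_out_nbrs.
case/orP: (edge_orient e_xy) => o_xy.
  apply: (sqr_fix_card_le2 (S := out_nbrs x)); rewrite ?card_out ?inE //.
  by move=> z; rewrite !inE => /(orient_act Gg); rewrite gx.
apply: (sqr_fix_card_le2 (S := in_nbrs x)); rewrite -?card_out_nbrs_in_nbrs ?card_out ?inE //.
by move=> z; rewrite !inE => /(orient_act Gg); rewrite gx.
Qed.

Lemma stab_odd_fix_nbr g x y : g \in G -> odd #[g] -> g x = x -> e x y -> g y = y.
Proof.
move=> Gg odd_g gx e_xy; suff /astab1P : g \in 'C[y | 'P] by [].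
have : g ^+ 2 \in 'C[y | 'P] by apply/astab1P; rewrite /= apermE (stab_sqr_fix_nbr _ gx).
rewrite -cycle_subG => /subsetP; apply.
have /eqP <- : generator <[g]> (g ^+ 2) by rewrite generator_coprime coprimen2.
exact: cycle_id.
Qed.

Lemma stab_odd_trivial g x : g \in G -> odd #[g] -> g x = x -> g = 1.
Proof.
move=> Gg odd_g gx; apply/permP=> z; rewrite perm1; apply/eqP.
apply: (connected_ind (P := fun z => g z == z)) (introT eqP gx) => y w e_yw /eqP gy.
by apply/eqP; apply: stab_odd_fix_nbr e_yw.
Qed.

Lemma pgroup_stab x : 2.-group 'C_G[x | 'P].
Proof.
apply/pgroupP=> p p_pr p_dvd; have [g Cg ord_g] := Cauchy p_pr p_dvd.
have [-> // | odd_p] := even_prime p_pr.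
case/setIP: Cg => Gg /astab1P gx.
have g1 : g = 1 by apply: (stab_odd_trivial Gg _ gx); rewrite ord_g.
by move: p_pr; rewrite -ord_g g1 order1.
Qed.

Section NormalQuotient.
Variable N : {group {perm V}}.
Hypothesis N_normal : N <| G.

Local Notation block x := (orbit 'P N x).

Lemma N_subG g : g \in N -> g \in G.
Proof. exact/subsetP/normal_sub. Qed.

Lemma blockP x y : reflect (exists2 n, n \in N & n x = y) (y \in block x).
Proof. by apply: (iffP orbitP) => [] [n Nn <-]; exists n. Qed.

Lemma block_N n x : n \in N -> block (n x) = block x.
Proof. by move=> Nn; rewrite -apermE orbit_act. Qed.

Lemma block_act g x : g \in G -> setact 'P (block x) g = block (g x).
Proof.
move=> Gg; have NJ n h : h \in G -> n \in N -> n ^ h \in N.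
  by move=> Gh Nn; rewrite memJ_norm // (subsetP (normal_norm N_normal)).
rewrite setactE; apply/setP=> z; apply/imsetP/blockP.
  case=> _ /blockP[n Nn <-] ->; exists (n ^ g); first exact: NJ.
  by rewrite /conjg !permM permK.
case=> n Nn <-; exists ((n ^ g^-1) x).
  by apply/blockP; exists (n ^ g^-1); rewrite ?NJ ?groupV.
by rewrite /= apermE /conjg !permM invgK permKV.
Qed.

Lemma mem_block_act g x y : g \in G -> (g y \in block (g x)) = (y \in block x).
Proof.
move=> Gg; rewrite -block_act // setactE.
by apply/imsetP/idP => [[z Bz /perm_inj -> //] | By]; exists y.
Qed.

Lemma quot_vertices_act g B : g \in G -> B \in quot_vertices N ->
  setact 'P B g \in quot_vertices N.
Proof. by move=> Gg /imsetP[x _ ->]; rewrite block_act //; apply: imset_f. Qed.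

Definition block_kernel := (G :&: 'C(quot_vertices N | 'P^*))%G.

Lemma block_kernelP g :
  reflect (g \in G /\ forall x, block (g x) = block x) (g \in block_kernel).
Proof.
apply: (iffP setIP) => [[Gg /astabP fixB] | [Gg fixB]]; split=> //.
  by move=> x; rewrite -block_act //; apply: fixB; apply: imset_f.
by apply/astabP => _ /imsetP[x _ ->] /=; rewrite block_act.
Qed.

Lemma N_sub_block_kernel : N \subset block_kernel.
Proof.
by apply/subsetP=> n Nn; apply/block_kernelP; split=> [|x]; rewrite ?N_subG ?block_N.
Qed.

Lemma solvable_block_kernel : solvable N -> solvable block_kernel.
Proof.
move=> sol_N; have sub_KG : block_kernel \subset G by apply: subsetIl.
rewrite (series_sol (normalS N_sub_block_kernel sub_KG N_normal)) sol_N /=.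
pose Kv := 'C_block_kernel[v0 | 'P].
have sub_KvN : block_kernel \subset Kv * N.
  apply/subsetP=> k Kk; case/block_kernelP: (Kk) => Gk fixB.
  have /blockP[n Nn nv0] : k v0 \in block v0 by rewrite -(fixB v0) orbit_refl.
  have Kn := subsetP N_sub_block_kernel n Nn.
  rewrite -(mulgKV n k); apply: imset2_f => //; rewrite inE groupM ?groupV //=.
  by apply/astab1P; rewrite /= apermE permM -nv0 permK.
have := quotientS N sub_KvN; rewrite quotientMidr => /solvableS; apply.
apply/quotient_sol/pgroup_sol.
by apply: pgroupS (pgroup_stab v0); apply: setSI; apply: subsetIl.
Qed.

Lemma mem_block_edge x y : e x y -> (y \in block x) = (u0 \in block v0).
Proof.
case/edge_orient/orP=> /orientP[g Gg [<- <-]]; rewrite mem_block_act //.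
by rewrite orbit_sym.
Qed.

Lemma edge_in_block_sub_kernel : u0 \in block v0 -> G \subset block_kernel.
Proof.
move=> u0_v0.
have all_v0 x : x \in block v0.
  apply: (connected_ind (P := fun z => z \in block v0) (x := v0)); last exact: orbit_refl.
  by move=> z w e_zw; apply: orbit_trans; rewrite mem_block_edge.
apply/subsetP=> g Gg; apply/block_kernelP; split=> // x.
by rewrite (orbit_eqP (all_v0 x)) (orbit_eqP (all_v0 (g x))).
Qed.

Definition deg_in x (C : {set V}) := #|[set z | e x z & z \in C]|.

Lemma deg_in_sum x C : deg_in x C = \sum_(z in C) e x z.
Proof.
rewrite /deg_in card_set_sum [RHS]big_mkcond; apply: eq_bigr => z _.
by case: (z \in C); rewrite ?andbT ?andbF.
Qed.

Lemma deg_in_act g x C : g \in G -> deg_in (g x) (setact 'P C g) = deg_in x C.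
Proof.
move=> Gg; rewrite /deg_in -[RHS](card_imset _ (@perm_inj _ g)).
apply: eq_card => z; rewrite !inE setactE.
apply/andP/imsetP => [[e_gxz /imsetP[y Cy z_gy]] | [y]].
  by exists y; rewrite // inE Cy andbT -(aut_edge _ _ Gg); move: e_gxz; rewrite z_gy.
by rewrite inE => /andP[e_xy Cy] ->; rewrite aut_edge // imset_f.
Qed.

Lemma deg_in_N n x y : n \in N -> deg_in (n x) (block y) = deg_in x (block y).
Proof. by move=> Nn; rewrite -{1}(block_N y Nn) -block_act ?N_subG ?deg_in_act ?N_subG. Qed.

Lemma card_block x y : #|block x| = #|block y|.
Proof.
suff card_v0 z : #|block z| = #|block v0| by rewrite !card_v0.
have [g Gg <-] := vertex_transitive_G v0 z.
by rewrite -block_act // setactE card_imset //; apply: perm_inj.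
Qed.

(* Both sides count the edges between the two blocks, divided by the common
   block size. *)
Lemma deg_in_sym x y : deg_in x (block y) = deg_in y (block x).
Proof.
have sum_block x1 y1 : \sum_(x2 in block x1) deg_in x2 (block y1) =
                       (#|block x1| * deg_in x1 (block y1))%N.
  by rewrite -sum_nat_const; apply: eq_bigr => _ /blockP[n Nn <-]; apply: deg_in_N.
have := sum_block x y; rewrite (eq_bigr _ (fun x2 _ => deg_in_sum x2 _)) exchange_big /=.
rewrite (eq_bigr (fun y2 => deg_in y2 (block x))) => [|y2 _]; last first.
  by rewrite deg_in_sum; apply: eq_bigr => x2 _; rewrite e_sym.
rewrite sum_block (card_block y x) => /eqP; rewrite eqn_mul2l => /orP[|/eqP //].
by rewrite cards_eq0 => /eqP/setP/(_ x); rewrite orbit_refl inE.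
Qed.

Lemma deg_in_edge x y : e x y -> deg_in x (block y) = deg_in v0 (block u0).
Proof.
case/edge_orient/orP=> /orientP[g Gg [<- <-]]; rewrite -?block_act ?deg_in_act //.
by rewrite deg_in_sym.
Qed.

Lemma quot_adj_block x C : C \in quot_vertices N -> quot_adj e N (block x) C ->
  exists2 y, e x y & C = block y.
Proof.
case/imsetP=> z _ -> /andP[_ /existsP[x' /andP[/blockP[n Nn nx] /existsP[y /andP[zy e_x'y]]]]].
exists (n^-1 y); first by rewrite -(aut_edge _ _ (N_subG Nn)) permKV nx.
by rewrite block_N ?groupV // (orbit_eqP zy).
Qed.

Lemma quot_adj_edge x y : u0 \notin block v0 -> e x y -> quot_adj e N (block x) (block y).
Proof.
move=> u0_nv0 e_xy; apply/andP; split.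
  by apply: contra u0_nv0 => /eqP eq_xy; rewrite -(mem_block_edge e_xy) eq_xy orbit_refl.
apply/existsP; exists x; rewrite orbit_refl /=.
by apply/existsP; exists y; rewrite orbit_refl.
Qed.

Lemma quot_vertex_nbrs x : u0 \notin block v0 ->
  [set C in quot_vertices N | quot_adj e N (block x) C] = [set block y | y in [set y | e x y]].
Proof.
move=> u0_nv0; apply/setP=> C; rewrite inE; apply/andP/imsetP => [[VC adjC] | [y]].
  by have [y e_xy ->] := quot_adj_block VC adjC; exists y; rewrite ?inE.
by rewrite inE => e_xy ->; rewrite imset_f ?quot_adj_edge.
Qed.

Section CoverCase.
Hypothesis deg1 : deg_in v0 (block u0) = 1%N.

Lemma nbr_in_block_uniq x y y' : e x y -> e x y' -> y' \in block y -> y' = y.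
Proof.
move=> e_xy e_xy' y'_y; have /eqP/cards1P[z eq_z] := etrans (deg_in_edge e_xy) deg1.
have : y \in [set z | e x z & z \in block y] by rewrite inE e_xy orbit_refl.
have : y' \in [set z | e x z & z \in block y] by rewrite inE e_xy' y'_y.
by rewrite eq_z !inE => /eqP -> /eqP ->.
Qed.

Lemma quot_regular_valency4 : u0 \notin block v0 -> quot_regular_of_valency e N 4.
Proof.
move=> u0_nv0 _ /imsetP[x _ ->]; rewrite quot_vertex_nbrs // -(e_valency4 x).
apply: card_in_imset => y y'; rewrite !inE => e_xy e_xy' eq_block.
by apply: (nbr_in_block_uniq e_xy' e_xy); rewrite -eq_block orbit_refl.
Qed.

Lemma semiregular_N : semiregular_perm N.
Proof.
move=> x; apply/trivgP/subsetP=> n /setIP[Nn /astab1P /= nx]; rewrite inE.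
apply/eqP/permP=> z; rewrite perm1; apply/eqP.
apply: (connected_ind (x := x) (P := fun z => n z == z)); last exact/eqP.
move=> y w e_yw /eqP ny; apply/eqP; apply: (nbr_in_block_uniq e_yw).
  by rewrite -ny aut_edge ?N_subG.
by rewrite -(block_N w Nn) orbit_refl.
Qed.

End CoverCase.

Lemma quot_adj_act g B C : g \in G ->
  quot_adj e N (setact 'P B g) (setact 'P C g) = quot_adj e N B C.
Proof.
have adj_act h B1 C1 : h \in G -> quot_adj e N B1 C1 ->
    quot_adj e N (setact 'P B1 h) (setact 'P C1 h).
  move=> Gh /andP[neBC /existsP[x /andP[Bx /existsP[y /andP[Cy e_xy]]]]]; apply/andP; split.
    by apply: contra neBC => /eqP eqBC; apply/eqP; apply: (act_inj 'P^* h).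
  apply/existsP; exists (h x); rewrite setactE imset_f //=.
  by apply/existsP; exists (h y); rewrite imset_f ?aut_edge.
move=> Gg; apply/idP/idP=> [/(adj_act _ _ _ (groupVr Gg)) | ]; last exact: adj_act.
by rewrite -[setact 'P _ g^-1]/('P^*%act _ g^-1) !actK.
Qed.

Lemma quot_adj_sym : symmetric (quot_adj e N).
Proof.
move=> B C; rewrite /quot_adj eq_sym; congr (_ && _).
by apply/existsP/existsP => -[x /andP[Bx /existsP[y /andP[Cy e_xy]]]];
  exists y; rewrite Cy /=; apply/existsP; exists x; rewrite Bx e_sym.
Qed.

(* The four neighbours of [x] fall into quotient neighbours of at least two each. *)
Lemma quot_valency_le2 : u0 \notin block v0 -> 1 < deg_in v0 (block u0) ->
  {in quot_vertices N, forall B, #|[set C in quot_vertices N | quot_adj e N B C]| <= 2}.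
Proof.
move=> u0_nv0 deg_gt1 _ /imsetP[x _ ->].
rewrite quot_vertex_nbrs // -(leq_pmul2r (_ : 0 < 2)) //.
have -> : (2 * 2 = \sum_(y in [set y | e x y]) 1)%N by rewrite sum1_card e_valency4.
rewrite (partition_big_imset (fun y => block y)) -sum_nat_const.
apply: leq_sum => _ /imsetP[y + ->]; rewrite inE => e_xy.
rewrite (eq_bigl (mem [set z | e x z & z \in block y])) => [|z].
  by rewrite sum1_card -/(deg_in x (block y)) deg_in_edge.
by rewrite !inE orbit_eq_mem.
Qed.

Lemma quot_connected_ind (P : pred {set V}) B0 : B0 \in quot_vertices N -> P B0 ->
  {in quot_vertices N &, forall B C, quot_adj e N B C -> P B -> P C} ->
  {in quot_vertices N, forall B, P B}.
Proof.
move=> /imsetP[x0 _ ->] P0 P_adj _ /imsetP[x _ ->].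
apply: (connected_ind (P := fun z => P (block z)) (x := x0)) => // z w e_zw Pz.
have [<- // | ne_zw] := eqVneq (block z) (block w).
apply: (P_adj _ _ (imset_f _ _) (imset_f _ _) _ Pz) => //.
apply/andP; split => //; apply/existsP; exists z; rewrite orbit_refl /=.
by apply/existsP; exists w; rewrite orbit_refl.
Qed.

Lemma der2_sub_block_kernel : u0 \notin block v0 -> 1 < deg_in v0 (block u0) ->
  G^`(2) \subset block_kernel.
Proof.
move=> u0_nv0 deg_gt1; rewrite subsetI der_sub /=.
have actsG : [acts G, on quot_vertices N | 'P^*].
  apply/subsetP=> g Gg; apply/astabsP=> B; apply/idP/idP => [VBg | /quot_vertices_act-> //].
  by rewrite -(actK 'P^* g B) quot_vertices_act ?groupV.
by apply: (der2_sub_astab actsG quot_adj_act quot_adj_sym (quot_valency_le2 u0_nv0 deg_gt1)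
          quot_connected_ind (imset_f _ _) (imset_f _ _) (quot_adj_edge u0_nv0 e_v0u0)).
Qed.

Lemma normal_cover_semiregular : solvable N -> ~~ solvable G ->
  normal_cover e N 4 /\ semiregular_perm N.
Proof.
move=> sol_N nsol_G.
have nsub_kernel n : ~~ (G^`(n) \subset block_kernel).
  apply: contra nsol_G => sub_K; rewrite -(der_sol n).
  exact: solvableS sub_K (solvable_block_kernel sol_N).
have u0_nv0 : u0 \notin block v0.
  by apply: contra (nsub_kernel 0) => /edge_in_block_sub_kernel.
have [deg_gt1 | deg_le1] := ltnP 1 (deg_in v0 (block u0)).
  by case/negP: (nsub_kernel 2); apply: der2_sub_block_kernel.
have deg1 : deg_in v0 (block u0) = 1%N.
  apply/eqP; rewrite eqn_leq deg_le1 card_gt0; apply/set0Pn.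
  by exists u0; rewrite inE e_v0u0 orbit_refl.
by split; [split; last exact: quot_regular_valency4 | exact: semiregular_N].
Qed.

End NormalQuotient.
End HalfArcTransitive.

Theorem lemma3p1 (V : finType) (e : rel V) (G N : {group {perm V}}) :
  simple_graph e ->
  connected_graph e ->
  regular_of_valency e 4 ->
  G \subset graph_aut e ->
  half_arc_transitive e G ->
  N <| G ->
  solvable N ->
  ~~ solvable G ->
  (normal_cover e N 4) /\ (semiregular_perm N).
Proof.
move=> [e_sym _] e_connected e_valency4 G_aut G_hat N_normal.
have [v0 [u0 e_v0u0]] := half_arc_transitive_edge G_hat.
by apply: (normal_cover_semiregular e_sym e_connected G_aut G_hat e_v0u0 e_valency4 N_normal).
Qed.
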